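(* For every integer $N\ge16$ there is $C<\infty$ such that for every interval $I_0\subset[0,1]$ and every decomposition $I_0=\bigcup_{r\ge1}I_r$ into pairwise disjoint intervals, $$\sum_{r\ge1}\widehat{\dot\sigma}(I_r)\,\mathsf E(I_r,\widehat{\dot\sigma})^2\,\mathrm P(I_r,\mathbf 1_{I_0}\widehat\omega)^2\le C\,\widehat\omega(I_0),$$ terms with $\widehat{\dot\sigma}(I_r)=0$ being interpreted as $0$.
   Context: $\mathrm P(I,\mu)=\int_{\mathbb R}\frac{|I|}{(|I|+\operatorname{dist}(x,I))^2}\,d\mu(x)$; for $\mu(I)>0$, $\mathsf E(I,\mu)^2=\frac12\,\frac{1}{\mu(I)^2}\int_I\int_I\frac{(x-x')^2}{|I|^2}\,d\mu(x)\,d\mu(x')$. Cantor intervals: fix an integer $N\ge16$. Set $I^0_1=[0,1]$. Each interval $I=[a,a+N^{-k}]$ of generation $k$ has two children of generation $k+1$: the left child $I_-=[a,a+N^{-k-1}]$ and the right child $I_+=[a+N^{-k}-N^{-k-1},a+N^{-k}]$. The $2^k$ intervals of generation $k$ are denoted $I^k_j$, $1\le j\le 2^k$, numbered left to right; $\mathcal D$ is the collection of all of them. $\dot z^k_j$ is the center of $I^k_j$. The Cantor set is $\mathsf E^{(N)}=\bigcap_{k}\bigcup_{j}I^k_j$. Redistributed Cantor measure: with $\eta=1/N$, $\widehat\omega$ is the unique Borel probability measure supported on $\mathsf E^{(N)}$ such that $\widehat\omega(I^1_1)=\widehat\omega(I^1_2)=\frac12$ and for every $I\in\mathcal D$ of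 generation $\ge1$: if $I$ is the left child of its parent then $\widehat\omega(I_-)=\frac{1+\eta}2\widehat\omega(I)$, $\widehat\omega(I_+)=\frac{1-\eta}2\widehat\omega(I)$; if $I$ is the right child of its parent then $\widehat\omega(I_-)=\frac{1-\eta}2\widehat\omega(I)$, $\widehat\omega(I_+)=\frac{1+\eta}2\widehat\omega(I)$. Weights: $\widehat s^k_j=N^{-2k}/\widehat\omega(I^k_j)$; $\widehat{\dot\sigma}=\sum_{k\ge0}\sum_{j=1}^{2^k}\widehat s^k_j\,\delta_{\dot z^k_j}$. *)

From Stdlib Require Import Reals Lra Lia Classical ClassicalEpsilon.
Open Scope R_scope.

Fixpoint sumR (n : nat) (f : nat -> R) : R :=
  match n with
  | O => 0
  | S m => sumR m f + f m
  end.

Definition decR (P : Prop) (a b : R) : R :=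
  if excluded_middle_informative P then a else b.

(* limit of a real sequence (0 if it does not converge; all sequences to
   which this is applied below converge) *)
Definition lim (u : nat -> R) : R :=
  match excluded_middle_informative (exists l, Un_cv u l) with
  | left H => proj1_sig (constructive_indefinite_description _ H)
  | right _ => 0
  end.

Record itv := Itv { lo : R; hi : R; lo_closed : bool; hi_closed : bool }.

Definition inI (I : itv) (x : R) : Prop :=
  (lo I < x \/ (lo_closed I = true /\ lo I = x)) /\
  (x < hi I \/ (hi_closed I = true /\ x = hi I)).

Definition len (I : itv) : R := Rmax 0 (hi I - lo I).

Definition distI (x : R) (I : itv) : R := Rmax 0 (Rmax (lo I - x) (x - hi I)).

(* ---------- Cantor intervals I^k_j, j = 0 .. 2^k - 1 (left to right) ----------
   The binary digits of j (most significant first) record the choices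
   left child (0) / right child (1) at generations 1..k; the parent of
   (k+1, j) is (k, j/2). *)

Definition eta (N : nat) : R := / INR N.

Fixpoint cL (N : nat) (k j : nat) : R :=
  match k with
  | O => 0
  | S k' => cL N k' (Nat.div2 j) +
            (if Nat.odd j then (/ INR N) ^ k' - (/ INR N) ^ (S k') else 0)
  end.

Definition clen (N k : nat) : R := (/ INR N) ^ k.
Definition zc (N k j : nat) : R := cL N k j + clen N k / 2.

Fixpoint wt (N : nat) (k j : nat) : R :=
  match k with
  | O => 1
  | S O => / 2
  | S (S k' as k1) =>
      wt N k1 (Nat.div2 j) *
      (if Bool.eqb (Nat.odd j) (Nat.odd (Nat.div2 j))
       then (1 + eta N) / 2 else (1 - eta N) / 2)
  end.

Definition sw (N k j : nat) : R := (/ INR N) ^ (2 * k) / wt N k j.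

(* ---------- the measure \widehat\omega ----------
   \widehat\omega is the weak limit of the discrete measures
   mu_k = sum_j \widehat\omega(I^k_j) delta_{\dot z^k_j}; for the sets and
   the (piecewise continuous, bounded) integrands used below the integral
   against \widehat\omega is the limit of the integrals against mu_k. *)

Definition omega_int (N : nat) (A : itv) (f : R -> R) : R :=
  lim (fun k => sumR (2 ^ k) (fun j =>
         decR (inI A (zc N k j)) (f (zc N k j) * wt N k j) 0)).

Definition omega (N : nat) (A : itv) : R := omega_int N A (fun _ => 1).

Definition Pker (I : itv) (x : R) : R := len I / (len I + distI x I) ^ 2.
Definition Pomega (N : nat) (I I0 : itv) : R := omega_int N I0 (Pker I).

Definition sigma (N : nat) (I : itv) : R :=
  lim (fun n => sumR n (fun k => sumR (2 ^ k) (fun j =>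
         decR (inI I (zc N k j)) (sw N k j) 0))).

(* int_I int_I (x-x')^2/|I|^2 dsigma(x) dsigma(x')  (nonnegative double series,
   summed over squares of generations) *)
Definition sigma_dbl (N : nat) (I : itv) : R :=
  lim (fun n => sumR n (fun k => sumR n (fun k' =>
         sumR (2 ^ k) (fun j => sumR (2 ^ k') (fun j' =>
           decR (inI I (zc N k j) /\ inI I (zc N k' j'))
             (sw N k j * sw N k' j' * (zc N k j - zc N k' j') ^ 2 / len I ^ 2)
             0))))).

Definition Esq (N : nat) (I : itv) : R :=
  / 2 * / (sigma N I) ^ 2 * sigma_dbl N I.

Definition term (N : nat) (I I0 : itv) : R :=
  decR (sigma N I = 0) 0 (sigma N I * Esq N I * (Pomega N I I0) ^ 2).

(* Each summand is at most 48 ω̂(I_r), and ω̂ is additive on the disjoint I_r, so C = 48 works.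
   Fix an interval I with σ̇(I) > 0 and let I^k_j be the Cantor interval of lowest generation
   whose centre c lies in I: by convexity of I it is unique, and every other centre in I
   belongs to one of its descendants.  Measuring positions from c,
     σ̇(I) E(I)^2 <= ∫_I ((x - c)/|I|)^2 dσ̇ <= σ̇(I) - s^k_j.
   If this is nonzero, I contains a centre of higher generation, hence |I| >= 7|I^k|/16, and the
   Poisson kernel of I is at most min(1/|I|, 1/|x - c|); summing over the Cantor intervals
   around c gives P(I, ω̂) <= 4 ω̂(I^k_j)/|I^k|.  Finally every atom of σ̇ in I of generation
   g > k has a child interval contained in I, on the side facing c; that child carries a fixed
   fraction of its ω̂-mass, while s^g_i (ω̂(I^k_j)/|I^k|)^2 <= 2^(k-g) ω̂(I^g_i) because
   N^-2 is much smaller than (1 - η)/2.  Summing the geometric series,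
   (σ̇(I) - s^k_j) (ω̂(I^k_j)/|I^k|)^2 <= 3 ω̂(I), and the three bounds multiply to 48 ω̂(I). *)

From Pilot Require Import Defs.
From Stdlib Require Import Reals Lra Lia Classical ClassicalEpsilon.
Open Scope R_scope.

(** * Finite sums and limits *)

Lemma sumR_ext n f g : (forall i, (i < n)%nat -> f i = g i) -> sumR n f = sumR n g.
Proof.
  induction n as [|n IH]; intros H; simpl; auto.
  rewrite IH, H; auto.
Qed.

Lemma sumR_le n f g : (forall i, (i < n)%nat -> f i <= g i) -> sumR n f <= sumR n g.
Proof.
  induction n as [|n IH]; intros H; simpl; [lra|].
  pose proof (H n (Nat.lt_succ_diag_r n)).
  pose proof (IH (fun i Hi => H i (Nat.lt_lt_succ_r _ _ Hi))). lra.
Qed.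

Lemma sumR_add n f g : sumR n (fun i => f i + g i) = sumR n f + sumR n g.
Proof. induction n as [|n IH]; simpl; [lra|]. rewrite IH; ring. Qed.

Lemma sumR_sub n f g : sumR n (fun i => f i - g i) = sumR n f - sumR n g.
Proof. induction n as [|n IH]; simpl; [lra|]. rewrite IH; ring. Qed.

Lemma sumR_scal n c f : sumR n (fun i => c * f i) = c * sumR n f.
Proof. induction n as [|n IH]; simpl; [lra|]. rewrite IH; ring. Qed.

Lemma sumR_eq0 n f : (forall i, (i < n)%nat -> f i = 0) -> sumR n f = 0.
Proof.
  induction n as [|n IH]; intros H; simpl; auto.
  rewrite IH, H; auto; lra.
Qed.

Lemma sumR_ge0 n f : (forall i, (i < n)%nat -> 0 <= f i) -> 0 <= sumR n f.
Proof. intros H. rewrite <- (sumR_eq0 n (fun _ => 0)) by auto. apply sumR_le; auto. Qed.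

Lemma sumR_le_const n f B : (forall i, (i < n)%nat -> f i <= B) -> sumR n f <= INR n * B.
Proof.
  induction n as [|n IH]; intros H; simpl sumR; [simpl; lra|].
  rewrite S_INR. pose proof (H n (Nat.lt_succ_diag_r n)).
  pose proof (IH (fun i Hi => H i (Nat.lt_lt_succ_r _ _ Hi))). lra.
Qed.

Lemma sumR_abs n f : Rabs (sumR n f) <= sumR n (fun i => Rabs (f i)).
Proof.
  induction n as [|n IH]; simpl; [rewrite Rabs_R0; lra|].
  eapply Rle_trans; [apply Rabs_triang|lra].
Qed.

Lemma sumR_app m n f : sumR (m + n) f = sumR m f + sumR n (fun i => f (m + i)%nat).
Proof.
  induction n as [|n IH]; simpl; [rewrite Nat.add_0_r; lra|].
  rewrite Nat.add_succ_r; simpl. rewrite IH; lra.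
Qed.

Lemma sumR_block m n f : sumR (m * n) f = sumR m (fun x => sumR n (fun y => f (x * n + y)%nat)).
Proof. induction m as [|m IH]; simpl; auto. rewrite Nat.add_comm, sumR_app, IH. reflexivity. Qed.

Lemma sumR_exchange m n f :
  sumR m (fun i => sumR n (fun j => f i j)) = sumR n (fun j => sumR m (fun i => f i j)).
Proof.
  induction m as [|m IH]; simpl.
  - symmetry; apply sumR_eq0; auto.
  - rewrite IH, <- sumR_add. reflexivity.
Qed.

Lemma sumR_pairs n f : sumR (2 * n) f = sumR n (fun j => f (2 * j)%nat + f (2 * j + 1)%nat).
Proof.
  induction n as [|n IH]; [reflexivity|].
  replace (2 * S n)%nat with (S (S (2 * n))) by lia. cbn [sumR]. rewrite IH.
  replace (2 * n + 1)%nat with (S (2 * n)) by lia. lra.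
Qed.

Lemma sumR_single n t f :
  (t < n)%nat -> (forall i, (i < n)%nat -> i <> t -> f i = 0) -> sumR n f = f t.
Proof.
  induction n as [|n IH]; intros Ht H; [lia|]. simpl. destruct (Nat.eq_dec t n) as [->|Hne].
  - rewrite sumR_eq0; [lra|]. intros i Hi; apply H; lia.
  - rewrite IH, (H n); [lra|lia|lia|lia|]. intros i Hi; apply H; lia.
Qed.

Lemma sumR_le_term n t f : (t < n)%nat -> (forall i, (i < n)%nat -> f i <= 0) -> sumR n f <= f t.
Proof.
  induction n as [|n IH]; intros Ht H; [lia|]. simpl. destruct (Nat.eq_dec t n) as [->|Hne].
  - assert (sumR n f <= 0) by (rewrite <- (sumR_eq0 n (fun _ => 0)) by auto; apply sumR_le; auto).
    lra.
  - pose proof (IH ltac:(lia) ltac:(auto)). pose proof (H n ltac:(lia)). lra.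
Qed.

Lemma sumR_geometric_half n : sumR n (fun g => (/ 2) ^ g) = 2 - 2 * (/ 2) ^ n.
Proof. induction n as [|n IH]; simpl sumR; [simpl; lra|]. rewrite IH; simpl; lra. Qed.

Definition sum_cantor (n : nat) (F : nat -> nat -> R) : R := sumR n (fun k => sumR (2 ^ k) (F k)).

Lemma sum_cantor_add n F G :
  sum_cantor n (fun k j => F k j + G k j) = sum_cantor n F + sum_cantor n G.
Proof.
  unfold sum_cantor. rewrite <- sumR_add. apply sumR_ext. intros k _. apply sumR_add.
Qed.

Lemma sum_cantor_scal n c F : sum_cantor n (fun k j => c * F k j) = c * sum_cantor n F.
Proof.
  unfold sum_cantor. rewrite <- sumR_scal. apply sumR_ext. intros k _. apply sumR_scal.
Qed.

Lemma sum_cantor_le_term n F k j : (k < n)%nat -> (j < 2 ^ k)%nat ->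
  (forall k j, F k j <= 0) -> sum_cantor n F <= F k j.
Proof.
  intros Hk Hj HF. unfold sum_cantor. eapply Rle_trans; [apply (sumR_le_term n k); auto|].
  - intros g _. rewrite <- (sumR_eq0 (2 ^ g) (fun _ => 0)) by auto. apply sumR_le; auto.
  - apply sumR_le_term; auto.
Qed.

Lemma sum_cantor_variance n f u :
  sum_cantor n (fun k j => sum_cantor n (fun k' j' => f k j * f k' j' * (u k j - u k' j') ^ 2)) =
  2 * sum_cantor n f * sum_cantor n (fun k j => f k j * u k j ^ 2)
  - 2 * sum_cantor n (fun k j => f k j * u k j) ^ 2.
Proof.
  transitivity (sum_cantor n (fun k j =>
    sum_cantor n (fun k' j' => f k' j' * u k' j' ^ 2) * f k j
    + (-2 * sum_cantor n (fun k' j' => f k' j' * u k' j')) * (f k j * u k j)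
    + sum_cantor n f * (f k j * u k j ^ 2))).
  - unfold sum_cantor at 1. apply sumR_ext. intros k _. apply sumR_ext. intros j _.
    transitivity (sum_cantor n (fun k' j' => f k j * (f k' j' * u k' j' ^ 2)
      + (-2 * (f k j * u k j)) * (f k' j' * u k' j') + (f k j * u k j ^ 2) * f k' j')).
    + unfold sum_cantor. apply sumR_ext. intros k' _. apply sumR_ext. intros j' _. ring.
    + rewrite !sum_cantor_add, !sum_cantor_scal. ring.
  - rewrite !sum_cantor_add, !sum_cantor_scal. ring.
Qed.

Lemma Rabs_le_inv x a : Rabs x <= a -> - a <= x <= a.
Proof. unfold Rabs. destruct (Rcase_abs x); lra. Qed.

Lemma cv_const c : Un_cv (fun _ => c) c.
Proof. intros e He. exists 0%nat. intros. unfold R_dist. rewrite Rminus_diag, Rabs_R0. auto. Qed.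

Lemma cv_le_const u l n0 B : Un_cv u l -> (forall n, (n >= n0)%nat -> u n <= B) -> l <= B.
Proof.
  intros H Hb. apply Rnot_lt_le; intro Hl. destruct (H (l - B)) as [M HM]; [lra|].
  specialize (HM (Nat.max M n0) ltac:(lia)). specialize (Hb (Nat.max M n0) ltac:(lia)).
  apply Rabs_def2 in HM. lra.
Qed.

Lemma cv_le u v l l' n0 :
  Un_cv u l -> Un_cv v l' -> (forall n, (n >= n0)%nat -> u n <= v n) -> l <= l'.
Proof.
  intros Hu Hv H. assert (l - l' <= 0); [|lra].
  apply (cv_le_const (fun n => u n - v n) _ n0); [apply CV_minus; auto|].
  intros n Hn. specialize (H n Hn). lra.
Qed.

Lemma cv_ge_const u l n0 B : Un_cv u l -> (forall n, (n >= n0)%nat -> B <= u n) -> B <= l.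
Proof. intros H Hb. exact (cv_le _ _ _ _ n0 (cv_const B) H Hb). Qed.

Lemma cv_sumR n u l :
  (forall r, (r < n)%nat -> Un_cv (u r) (l r)) -> Un_cv (fun K => sumR n (fun r => u r K)) (sumR n l).
Proof.
  induction n as [|n IH]; simpl; intros H; [apply cv_const|].
  apply CV_plus; [apply IH; auto|apply H; lia].
Qed.

Lemma pow_cv0 x : 0 <= x < 1 -> Un_cv (fun n => x ^ n) 0.
Proof.
  intros Hx e He. destruct (pow_lt_1_zero x ltac:(rewrite Rabs_right; lra) e He) as [M HM].
  exists M. intros n Hn. unfold R_dist. rewrite Rminus_0_r. auto.
Qed.

(* [u n + C q^n / (1 - q)] decreases and stays above [u 0 - C / (1 - q)]. *)
Lemma cv_of_geometric_steps u C q :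
  0 <= q < 1 -> (forall n, Rabs (u (S n) - u n) <= C * q ^ n) -> exists l, Un_cv u l.
Proof.
  intros Hq Hstep. set (a := C / (1 - q)).
  assert (Hs : forall n, - (C * q ^ n) <= u (S n) - u n <= C * q ^ n).
  { intros n. apply Rabs_le_inv, Hstep. }
  assert (Ha : forall n, a * q ^ S n = a * q ^ n - C * q ^ n) by (intros n; simpl; unfold a; field; lra).
  assert (Hpos : forall n, 0 <= a * q ^ n).
  { intros n. specialize (Hs 0%nat). simpl in Hs.
    apply Rmult_le_pos; [apply Rle_mult_inv_pos; lra|apply pow_le; lra]. }
  assert (Hlow : forall n, u 0%nat - a <= u n - a * q ^ n).
  { induction n as [|n IH]; [simpl; lra|]. specialize (Hs n). rewrite Ha. lra. }
  destruct (decreasing_cv (fun n => u n + a * q ^ n)) as [l Hl].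
  - intros n. specialize (Hs n). cbv beta. rewrite Ha. lra.
  - exists (a - u 0%nat). intros r [n ->]. unfold opp_seq.
    specialize (Hlow n). specialize (Hpos n). lra.
  - exists (l - a * 0).
    apply (Un_cv_ext (fun n => u n + a * q ^ n - a * q ^ n)); [intros n; ring|].
    apply (CV_minus _ _ _ _ Hl). apply CV_mult; [apply cv_const|apply pow_cv0; auto].
Qed.

Lemma lim_of_cv u l : Un_cv u l -> lim u = l.
Proof.
  intros H. unfold lim. destruct (excluded_middle_informative _) as [e|e].
  - destruct (constructive_indefinite_description _ e) as [l' H']. simpl. eapply UL_sequence; eauto.
  - exfalso; eauto.
Qed.

Lemma lim_no_cv u : ~ (exists l, Un_cv u l) -> lim u = 0.
Proof. intros H. unfold lim. destruct (excluded_middle_informative _); tauto. Qed.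

Lemma lim_ext u v : (forall n, u n = v n) -> lim u = lim v.
Proof.
  intros H. destruct (classic (exists l, Un_cv u l)) as [[l Hl]|Hn].
  - rewrite (lim_of_cv _ _ Hl). symmetry. apply lim_of_cv, (Un_cv_ext u); auto.
  - rewrite !lim_no_cv; auto. intros [l Hl]. apply Hn. exists l. apply (Un_cv_ext v); auto.
Qed.

(* The sign condition covers the case where [u] diverges and [lim u] is [0]. *)
Lemma lim_le_cv u v l n0 :
  Un_cv v l -> (forall n, (n >= n0)%nat -> u n <= v n) -> 0 <= l -> lim u <= l.
Proof.
  intros Hv H Hl. destruct (classic (exists l', Un_cv u l')) as [[l' Hu]|Hn].
  - rewrite (lim_of_cv _ _ Hu). eapply cv_le; eauto.
  - rewrite lim_no_cv; auto.
Qed.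

Lemma lim_le u n0 B : (forall n, (n >= n0)%nat -> u n <= B) -> 0 <= B -> lim u <= B.
Proof. intros H HB. exact (lim_le_cv u _ B n0 (cv_const B) H HB). Qed.

Lemma lim_ge0 u : (forall n, 0 <= u n) -> 0 <= lim u.
Proof.
  intros H. destruct (classic (exists l, Un_cv u l)) as [[l Hl]|Hn].
  - rewrite (lim_of_cv _ _ Hl). apply (cv_ge_const u l 0%nat); auto.
  - rewrite lim_no_cv; auto; lra.
Qed.

Lemma decR_true (P : Prop) a b : P -> decR P a b = a.
Proof. unfold decR. destruct (excluded_middle_informative P); tauto. Qed.

Lemma decR_false (P : Prop) a b : ~ P -> decR P a b = b.
Proof. unfold decR. destruct (excluded_middle_informative P); tauto. Qed.

Lemma decR_between (P : Prop) a : 0 <= a -> 0 <= decR P a 0 <= a.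
Proof. intros. destruct (classic P); [rewrite decR_true|rewrite decR_false]; auto; lra. Qed.

(** * Intervals and the Poisson kernel *)

Lemma inI_bounds I x : inI I x -> lo I <= x <= hi I.
Proof. unfold inI. intros [[H|[_ H]] [H'|[_ H']]]; lra. Qed.

Lemma inI_convex I x y t : inI I x -> inI I y -> x <= t <= y -> inI I t.
Proof.
  unfold inI. intros [Hx _] [_ Hy] Ht. split.
  - destruct (Req_dec x t) as [<-|]; auto. left. destruct Hx as [|[_ ?]]; lra.
  - destruct (Req_dec y t) as [<-|]; auto. left. destruct Hy as [|[_ ?]]; lra.
Qed.

Lemma inI_dist_le_len I x y : inI I x -> inI I y -> Rabs (x - y) <= len I.
Proof.
  intros Hx%inI_bounds Hy%inI_bounds. pose proof (Rmax_r 0 (hi I - lo I)).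
  apply Rabs_le. unfold len. lra.
Qed.

Lemma inI_iff_no_endpoint I a b x y : a <= x <= b -> a <= y <= b ->
  ~ (a <= lo I <= b) -> ~ (a <= hi I <= b) -> (inI I x <-> inI I y).
Proof.
  assert (Hside : forall x y, a <= x <= b -> a <= y <= b -> ~ (a <= lo I <= b) -> ~ (a <= hi I <= b) ->
    inI I x -> inI I y).
  { intros x' y' Hx Hy Hlo Hhi Hin. apply inI_bounds in Hin.
    split; left; apply Rnot_le_lt; intro; [apply Hlo|apply Hhi]; lra. }
  split; apply Hside; auto.
Qed.

Lemma distI_bounds x I : 0 <= distI x I /\ lo I - x <= distI x I /\ x - hi I <= distI x I.
Proof.
  unfold distI. pose proof (Rmax_l 0 (Rmax (lo I - x) (x - hi I))).
  pose proof (Rmax_r 0 (Rmax (lo I - x) (x - hi I))).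
  pose proof (Rmax_l (lo I - x) (x - hi I)). pose proof (Rmax_r (lo I - x) (x - hi I)). lra.
Qed.

Section PoissonKernel.

Variable I : itv.
Hypothesis Hlen : 0 < len I.

Lemma Pker_ge0 x : 0 <= Pker I x.
Proof.
  pose proof (distI_bounds x I). unfold Pker.
  apply Rle_mult_inv_pos; [lra|]. apply pow_lt. lra.
Qed.

Lemma Pker_le_inv_len x : Pker I x <= / len I.
Proof.
  pose proof (distI_bounds x I). unfold Pker. set (s := len I + distI x I).
  assert (len I <= s) by (unfold s; lra).
  apply Rle_trans with (len I / len I ^ 2).
  - unfold Rdiv. apply Rmult_le_compat_l; [lra|].
    apply Rinv_le_contravar; [apply pow_lt; lra|]. simpl. nra.
  - right. field. lra.
Qed.

Lemma Pker_le_inv_dist c x : inI I c -> 0 < Rabs (x - c) -> Pker I x <= / Rabs (x - c).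
Proof.
  intros Hc Hx. pose proof (inI_bounds I c Hc). pose proof (distI_bounds x I).
  assert (hi I - lo I <= len I) by apply Rmax_r.
  set (s := len I + distI x I).
  assert (Hs : Rabs (x - c) <= s) by (unfold s, Rabs; destruct (Rcase_abs (x - c)); lra).
  unfold Pker. fold s. apply Rle_trans with (/ s).
  - apply Rle_trans with (s / s ^ 2).
    + unfold Rdiv. apply Rmult_le_compat_r; [apply Rlt_le, Rinv_0_lt_compat, pow_lt|]; unfold s; lra.
    + right. field. unfold s. lra.
  - apply Rinv_le_contravar; lra.
Qed.

End PoissonKernel.

(** * Cantor intervals and their weights *)

Lemma pow2_S m : (2 ^ S m = 2 ^ m + 2 ^ m)%nat.
Proof. simpl. lia. Qed.

Lemma sumR_pow2_S K f : sumR (2 ^ S K) f = sumR (2 ^ K) (fun j => f (2 * j)%nat + f (2 * j + 1)%nat).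
Proof. rewrite Nat.pow_succ_r'. apply sumR_pairs. Qed.

(* The descendants of [I^h_b] in generation [h + m] are the [I^(h+m)_(b 2^m + t)], [t < 2^m]. *)
Lemma sumR_desc_S (f : nat -> R) m b :
  sumR (2 ^ S m) (fun t => f (b * 2 ^ S m + t)%nat) =
  sumR (2 ^ m) (fun t => f (2 * b * 2 ^ m + t)%nat)
  + sumR (2 ^ m) (fun t => f ((2 * b + 1) * 2 ^ m + t)%nat).
Proof.
  rewrite pow2_S at 1. rewrite sumR_app.
  f_equal; apply sumR_ext; intros; f_equal; rewrite pow2_S; ring.
Qed.

Lemma desc_index_S m b t : (t < 2 ^ S m)%nat ->
  (t < 2 ^ m /\ b * 2 ^ S m + t = 2 * b * 2 ^ m + t)%nat \/
  (exists t', t' < 2 ^ m /\ b * 2 ^ S m + t = (2 * b + 1) * 2 ^ m + t')%nat.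
Proof.
  intros Ht. rewrite pow2_S in *. destruct (Nat.lt_ge_cases t (2 ^ m)).
  - left. split; [auto|ring].
  - right. exists (t - 2 ^ m)%nat. split; [lia|].
    replace t with (2 ^ m + (t - 2 ^ m))%nat at 1 by lia. ring.
Qed.

Definition in_cantor (N k j : nat) (x : R) : Prop := cL N k j <= x <= cL N k j + clen N k.

Lemma clen_S N k : clen N (S k) = eta N * clen N k.
Proof. reflexivity. Qed.

Lemma cL_left N k j : cL N (S k) (2 * j) = cL N k j.
Proof. cbn [cL]. rewrite Nat.div2_double, Nat.odd_even. lra. Qed.

Lemma cL_right N k j : cL N (S k) (2 * j + 1) = cL N k j + clen N k - clen N (S k).
Proof. cbn [cL]. rewrite Nat.odd_odd, Nat.div2_odd'. unfold clen. ring. Qed.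

Section CantorGeometry.

Variable N : nat.
Hypothesis HN : (16 <= N)%nat.

Lemma eta_bounds : 0 < eta N <= / 16.
Proof.
  unfold eta. assert (16 <= INR N) by (replace 16 with (INR 16) by (simpl; lra); apply le_INR; auto).
  split; [apply Rinv_0_lt_compat|apply Rinv_le_contravar]; lra.
Qed.

Lemma clen_pos k : 0 < clen N k.
Proof. apply pow_lt. apply eta_bounds. Qed.

Lemma zc_in_cantor k j : in_cantor N k j (zc N k j).
Proof. pose proof (clen_pos k). unfold in_cantor, zc. lra. Qed.

Lemma clen_S_le k : clen N (S k) <= / 16 * clen N k.
Proof. rewrite clen_S. apply Rmult_le_compat_r; [apply Rlt_le, clen_pos|apply eta_bounds]. Qed.

Lemma in_cantor_left k j x :
  in_cantor N (S k) (2 * j) x -> in_cantor N k j x /\ x <= zc N k j - 7/16 * clen N k.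
Proof.
  unfold in_cantor, zc. rewrite cL_left. pose proof (clen_pos (S k)). pose proof (clen_S_le k). lra.
Qed.

Lemma in_cantor_right k j x :
  in_cantor N (S k) (2 * j + 1) x -> in_cantor N k j x /\ zc N k j + 7/16 * clen N k <= x.
Proof.
  unfold in_cantor, zc. rewrite cL_right. pose proof (clen_pos (S k)). pose proof (clen_S_le k). lra.
Qed.

Lemma in_cantor_parent k j x : in_cantor N (S k) j x -> in_cantor N k (Nat.div2 j) x.
Proof.
  rewrite (Nat.div2_odd j) at 1. destruct (Nat.odd j); simpl Nat.b2n; intros Hx.
  - apply (in_cantor_right _ _ _ Hx).
  - rewrite Nat.add_0_r in Hx. apply (in_cantor_left _ _ _ Hx).
Qed.

Lemma in_cantor_desc m h b t x :
  (t < 2 ^ m)%nat -> in_cantor N (h + m) (b * 2 ^ m + t) x -> in_cantor N h b x.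
Proof.
  revert h b t. induction m as [|m IH]; intros h b t Ht Hx.
  - simpl in Ht. replace t with 0%nat in Hx by lia.
    rewrite Nat.add_0_r, Nat.mul_1_r, Nat.add_0_r in Hx. exact Hx.
  - rewrite <- plus_n_Sm, <- Nat.add_succ_l in Hx.
    destruct (desc_index_S m b t Ht) as [[Ht' E]|[t' [Ht' E]]]; rewrite E in Hx;
      apply IH in Hx; auto.
    + apply (in_cantor_left _ _ _ Hx).
    + apply (in_cantor_right _ _ _ Hx).
Qed.

Lemma in_cantor_desc_child m h b t : (t < 2 ^ S m)%nat ->
  (forall x, in_cantor N (h + S m) (b * 2 ^ S m + t) x -> in_cantor N (S h) (2 * b) x) \/
  (forall x, in_cantor N (h + S m) (b * 2 ^ S m + t) x -> in_cantor N (S h) (2 * b + 1) x).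
Proof.
  intros Ht. rewrite <- plus_n_Sm, <- Nat.add_succ_l.
  destruct (desc_index_S m b t Ht) as [[Ht' ->]|[t' [Ht' ->]]]; [left|right];
    intros x; apply in_cantor_desc; auto.
Qed.

Lemma in_cantor_near_far m h b t c : (t < 2 ^ S m)%nat ->
  in_cantor N (h + S m) (b * 2 ^ S m + t) c ->
  exists cn cf t', (t' < 2 ^ m)%nat /\ (b * 2 ^ S m + t = cn * 2 ^ m + t')%nat /\
    ((cn = 2 * b /\ cf = 2 * b + 1) \/ (cn = 2 * b + 1 /\ cf = 2 * b))%nat /\
    forall x, in_cantor N (S h) cf x -> 7/8 * clen N h <= Rabs (x - c).
Proof.
  intros Ht Hc. pose proof (clen_pos h). rewrite <- plus_n_Sm, <- Nat.add_succ_l in Hc.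
  destruct (desc_index_S m b t Ht) as [[Ht' E]|[t' [Ht' E]]]; rewrite E in Hc;
    apply in_cantor_desc in Hc; auto.
  - exists (2 * b)%nat, (2 * b + 1)%nat, t. repeat split; auto.
    intros x Hx. apply in_cantor_left in Hc. apply in_cantor_right in Hx.
    rewrite Rabs_right; lra.
  - exists (2 * b + 1)%nat, (2 * b)%nat, t'. repeat split; auto.
    intros x Hx. apply in_cantor_right in Hc. apply in_cantor_left in Hx.
    rewrite Rabs_left1; lra.
Qed.

Lemma cantor_separated K j1 j2 x y :
  (j1 < 2 ^ K)%nat -> (j2 < 2 ^ K)%nat -> j1 <> j2 ->
  in_cantor N K j1 x -> in_cantor N K j2 y ->
  exists h b, (h < K)%nat /\ (b < 2 ^ h)%nat /\ (x < zc N h b < y \/ y < zc N h b < x).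
Proof.
  revert j1 j2 x y. induction K as [|K IH]; intros j1 j2 x y H1 H2 Hne Hx Hy; [simpl in *; lia|].
  assert (Hdiv : forall j, (j < 2 ^ S K)%nat -> (Nat.div2 j < 2 ^ K)%nat).
  { intros j Hj. rewrite Nat.div2_div. apply Nat.Div0.div_lt_upper_bound. simpl in Hj. lia. }
  destruct (Nat.eq_dec (Nat.div2 j1) (Nat.div2 j2)) as [E|E].
  - exists K, (Nat.div2 j1). split; [lia|]. split; [auto|].
    rewrite (Nat.div2_odd j1) in Hx. rewrite (Nat.div2_odd j2), <- E in Hy.
    assert (Nat.odd j1 <> Nat.odd j2).
    { intro Ho. apply Hne. rewrite (Nat.div2_odd j1), (Nat.div2_odd j2), E, Ho. reflexivity. }
    pose proof (clen_pos K).
    destruct (Nat.odd j1), (Nat.odd j2); simpl Nat.b2n in *; try congruence; rewrite ?Nat.add_0_r in *.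
    + apply in_cantor_right in Hx. apply in_cantor_left in Hy. lra.
    + apply in_cantor_left in Hx. apply in_cantor_right in Hy. lra.
  - apply in_cantor_parent in Hx. apply in_cantor_parent in Hy.
    destruct (IH _ _ x y (Hdiv _ H1) (Hdiv _ H2) E Hx Hy) as [h [b [? [? ?]]]].
    exists h, b. repeat split; auto.
Qed.

End CantorGeometry.

Definition pmin (N : nat) : R := (1 - eta N) / 2.
Definition pmax (N : nat) : R := (1 + eta N) / 2.

Definition density (N k j : nat) : R := wt N k j / clen N k.

Lemma wt_SS N k j : wt N (S (S k)) j =
  wt N (S k) (Nat.div2 j) * (if Bool.eqb (Nat.odd j) (Nat.odd (Nat.div2 j)) then pmax N else pmin N).
Proof. reflexivity. Qed.

Lemma sw_eq N k j : sw N k j = clen N k ^ 2 / wt N k j.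
Proof. unfold sw, clen. rewrite Nat.mul_comm, pow_mult. reflexivity. Qed.

Section Weights.

Variable N : nat.
Hypothesis HN : (16 <= N)%nat.

Lemma pmin_pmax_bounds : 15/32 <= pmin N <= / 2 /\ / 2 <= pmax N <= 17/32.
Proof. pose proof (eta_bounds N HN). unfold pmin, pmax. lra. Qed.

Lemma wt_pos k j : 0 < wt N k j.
Proof.
  pose proof pmin_pmax_bounds. revert j. induction k as [|[|k] IH]; intros j; try (simpl; lra).
  rewrite wt_SS. apply Rmult_lt_0_compat; [apply IH|]. destruct (Bool.eqb _ _); lra.
Qed.

Lemma sw_pos k j : 0 < sw N k j.
Proof.
  rewrite sw_eq. pose proof (clen_pos N HN k). pose proof (wt_pos k j).
  apply Rdiv_lt_0_compat; nra.
Qed.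

Lemma wt_children k j :
  wt N (S k) (2 * j) + wt N (S k) (2 * j + 1) = wt N k j /\
  pmin N * wt N k j <= wt N (S k) (2 * j) <= pmax N * wt N k j /\
  pmin N * wt N k j <= wt N (S k) (2 * j + 1) <= pmax N * wt N k j.
Proof.
  pose proof pmin_pmax_bounds. assert (pmin N + pmax N = 1) by (unfold pmin, pmax; lra).
  destruct k as [|k]; [simpl; lra|].
  rewrite !wt_SS, Nat.div2_double, Nat.odd_even, Nat.div2_odd', Nat.odd_odd.
  pose proof (wt_pos (S k) j).
  destruct (Nat.odd j); cbn [Bool.eqb]; repeat split; nra.
Qed.

Lemma wt_desc_sum m h b : sumR (2 ^ m) (fun t => wt N (h + m) (b * 2 ^ m + t)) = wt N h b.
Proof.
  revert h b. induction m as [|m IH]; intros h b.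
  - simpl. rewrite Nat.add_0_r, Nat.mul_1_r, Nat.add_0_r. lra.
  - rewrite (sumR_desc_S (wt N (h + S m))), <- plus_n_Sm, <- Nat.add_succ_l, !IH.
    apply wt_children.
Qed.

Lemma wt_desc_lower m h b t : (t < 2 ^ m)%nat -> pmin N ^ m * wt N h b <= wt N (h + m) (b * 2 ^ m + t).
Proof.
  revert h b t. pose proof pmin_pmax_bounds. induction m as [|m IH]; intros h b t Ht.
  - simpl in Ht. replace t with 0%nat by lia. rewrite Nat.add_0_r, Nat.mul_1_r, Nat.add_0_r. lra.
  - rewrite <- plus_n_Sm, <- Nat.add_succ_l. pose proof (pow_le (pmin N) m ltac:(lra)).
    destruct (wt_children h b) as [_ [Hl Hr]]. simpl pow.
    destruct (desc_index_S m b t Ht) as [[Ht' ->]|[t' [Ht' ->]]];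
      (eapply Rle_trans; [|apply IH; auto]); rewrite (Rmult_comm (pmin N)), Rmult_assoc;
      apply Rmult_le_compat_l; lra.
Qed.

Lemma wt_le_desc m h b t : (t < 2 ^ m)%nat -> wt N h b <= (/ pmin N) ^ m * wt N (h + m) (b * 2 ^ m + t).
Proof.
  intros Ht. pose proof pmin_pmax_bounds. pose proof (wt_desc_lower m h b t Ht).
  pose proof (pow_lt (pmin N) m ltac:(lra)).
  rewrite pow_inv. apply Rmult_le_reg_l with (pmin N ^ m); [lra|].
  rewrite <- Rmult_assoc, Rinv_r, Rmult_1_l by lra. lra.
Qed.

Lemma wt_desc_average_le m h b (F : R -> R) M :
  (forall x, in_cantor N h b x -> F x <= M) ->
  sumR (2 ^ m) (fun t => wt N (h + m) (b * 2 ^ m + t) * F (zc N (h + m) (b * 2 ^ m + t)))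
  <= M * wt N h b.
Proof.
  intros HF. rewrite <- (wt_desc_sum m h b), <- sumR_scal. apply sumR_le. intros t Ht.
  pose proof (wt_pos (h + m) (b * 2 ^ m + t)).
  assert (F (zc N (h + m) (b * 2 ^ m + t)) <= M)
    by (apply HF; eapply in_cantor_desc; eauto; apply zc_in_cantor; auto).
  nra.
Qed.

Lemma sw_density_le h b m i : pmin N ^ m * wt N h b <= wt N (h + m) i ->
  sw N (h + m) i * density N h b ^ 2 <= (/ 2) ^ m * wt N (h + m) i.
Proof.
  intros Hw. pose proof pmin_pmax_bounds. pose proof (eta_bounds N HN).
  pose proof (wt_pos h b). pose proof (wt_pos (h + m) i).
  assert (Hratio : 0 <= (eta N / pmin N) ^ 2 <= / 2).
  { split; [apply pow2_ge_0|].
    assert (eta N / pmin N <= 2 / 15); [|pose proof (Rle_mult_inv_pos (eta N) (pmin N)); nra].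
    apply Rmult_le_reg_r with (pmin N); [lra|]. unfold Rdiv. rewrite Rmult_assoc, Rinv_l; lra. }
  rewrite sw_eq. unfold density, clen. rewrite pow_add. fold (eta N).
  pose proof (pow_lt (eta N) h ltac:(lra)). pose proof (pow_lt (pmin N) m ltac:(lra)).
  replace ((eta N ^ h * eta N ^ m) ^ 2 / wt N (h + m) i * (wt N h b / eta N ^ h) ^ 2)
    with (((eta N / pmin N) ^ 2) ^ m * ((pmin N ^ m * wt N h b) ^ 2 / wt N (h + m) i))
    by (unfold Rdiv; rewrite <- !pow_mult, Nat.mul_comm, pow_mult, !Rpow_mult_distr, pow_inv; field; lra).
  apply Rmult_le_compat;
    [apply pow_le; lra|apply Rle_mult_inv_pos; [apply pow2_ge_0|lra]|apply pow_incr; lra|].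
  apply Rmult_le_reg_r with (wt N (h + m) i); [lra|]. unfold Rdiv. rewrite Rmult_assoc, Rinv_l by lra.
  assert (0 <= pmin N ^ m * wt N h b) by (apply Rmult_le_pos; lra). simpl. nra.
Qed.

End Weights.

(** * The measure [ω̂] *)

Definition omegaK (N : nat) (I : itv) (K : nat) : R :=
  sumR (2 ^ K) (fun j => decR (inI I (zc N K j)) (wt N K j) 0).

Definition omega_desc (N : nat) (I : itv) (K g i : nat) : R :=
  sumR (2 ^ (K - g)) (fun t =>
    decR (inI I (zc N K (i * 2 ^ (K - g) + t))) (wt N K (i * 2 ^ (K - g) + t)) 0).

Lemma omega_lim N I : omega N I = lim (omegaK N I).
Proof. apply lim_ext. intros K. apply sumR_ext. intros j _. rewrite Rmult_1_l. reflexivity. Qed.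

Lemma omegaK_desc_split N I K g : (g <= K)%nat -> omegaK N I K = sumR (2 ^ g) (omega_desc N I K g).
Proof.
  intros Hg. unfold omegaK. replace (2 ^ K)%nat with (2 ^ g * 2 ^ (K - g))%nat
    by (rewrite <- Nat.pow_add_r; f_equal; lia).
  apply sumR_block.
Qed.

Section Omega.

Variable N : nat.
Hypothesis HN : (16 <= N)%nat.

Lemma omegaK_ge0 I K : 0 <= omegaK N I K.
Proof. apply sumR_ge0. intros j _. apply decR_between, Rlt_le, wt_pos; auto. Qed.

Lemma omega_desc_ge0 I K g i : 0 <= omega_desc N I K g i.
Proof. apply sumR_ge0. intros t _. apply decR_between, Rlt_le, wt_pos; auto. Qed.

Lemma cantor_mass_at_point x K :
  sumR (2 ^ K) (fun j => decR (in_cantor N K j x) (wt N K j) 0) <= pmax N ^ K.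
Proof.
  pose proof (pmin_pmax_bounds N HN) as Hq. induction K as [|K IH].
  - simpl. pose proof (decR_between (in_cantor N 0 0 x) 1). lra.
  - rewrite sumR_pow2_S. simpl pow.
    eapply Rle_trans; [|apply Rmult_le_compat_l; [lra|exact IH]]. rewrite <- sumR_scal.
    apply sumR_le. intros j _. destruct (wt_children N HN K j) as [_ [Hl Hr]].
    pose proof (wt_pos N HN K j) as Hw. pose proof (clen_pos N HN K) as Hc.
    destruct (classic (in_cantor N (S K) (2 * j) x)) as [H0|H0];
      [|destruct (classic (in_cantor N (S K) (2 * j + 1) x)) as [H1|H1]].
    + pose proof (in_cantor_left N HN _ _ _ H0) as [Hp Hx].
      assert (H1 : ~ in_cantor N (S K) (2 * j + 1) x) by (intros [_ ?]%(in_cantor_right N HN); lra).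
      rewrite (decR_true _ _ _ H0), (decR_false _ _ _ H1), (decR_true _ _ _ Hp). lra.
    + pose proof (in_cantor_right N HN _ _ _ H1) as [Hp _].
      rewrite (decR_false _ _ _ H0), (decR_true _ _ _ H1), (decR_true _ _ _ Hp). lra.
    + rewrite (decR_false _ _ _ H0), (decR_false _ _ _ H1).
      pose proof (decR_between (in_cantor N K j x) (wt N K j)). nra.
Qed.

(* Unless an endpoint of [I] lies in [I^K_j], the parent and both children are all inside or
   all outside [I]. *)
Lemma omegaK_parent_step I K j :
  Rabs (decR (inI I (zc N (S K) (2 * j))) (wt N (S K) (2 * j)) 0
        + decR (inI I (zc N (S K) (2 * j + 1))) (wt N (S K) (2 * j + 1)) 0
        - decR (inI I (zc N K j)) (wt N K j) 0)
  <= decR (in_cantor N K j (lo I)) (wt N K j) 0 + decR (in_cantor N K j (hi I)) (wt N K j) 0.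
Proof.
  destruct (wt_children N HN K j) as [Hsum _]. pose proof (wt_pos N HN K j) as Hw.
  pose proof (wt_pos N HN (S K) (2 * j)). pose proof (wt_pos N HN (S K) (2 * j + 1)).
  pose proof (decR_between (in_cantor N K j (lo I)) (wt N K j) ltac:(lra)).
  pose proof (decR_between (in_cantor N K j (hi I)) (wt N K j) ltac:(lra)).
  set (a := cL N K j). set (b := cL N K j + clen N K).
  destruct (classic (a <= lo I <= b \/ a <= hi I <= b)) as [Hend|Hend].
  - assert (wt N K j <= decR (in_cantor N K j (lo I)) (wt N K j) 0
                        + decR (in_cantor N K j (hi I)) (wt N K j) 0).
    { destruct Hend as [He|He];
        [rewrite (decR_true (in_cantor N K j (lo I))) by exact He
        |rewrite (decR_true (in_cantor N K j (hi I))) by exact He]; lra. }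
    pose proof (decR_between (inI I (zc N K j)) (wt N K j) ltac:(lra)).
    pose proof (decR_between (inI I (zc N (S K) (2 * j))) (wt N (S K) (2 * j)) ltac:(lra)).
    pose proof (decR_between (inI I (zc N (S K) (2 * j + 1))) (wt N (S K) (2 * j + 1)) ltac:(lra)).
    apply Rabs_le. lra.
  - assert (Hz : a <= zc N K j <= b) by apply (zc_in_cantor N HN).
    assert (Hz0 : a <= zc N (S K) (2 * j) <= b) by apply (in_cantor_left N HN), zc_in_cantor, HN.
    assert (Hz1 : a <= zc N (S K) (2 * j + 1) <= b) by apply (in_cantor_right N HN), zc_in_cantor, HN.
    pose proof (inI_iff_no_endpoint I a b _ _ Hz Hz0 ltac:(tauto) ltac:(tauto)).
    pose proof (inI_iff_no_endpoint I a b _ _ Hz Hz1 ltac:(tauto) ltac:(tauto)).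
    destruct (classic (inI I (zc N K j))) as [Hin|Hin].
    + rewrite !decR_true by tauto. rewrite Rabs_right; lra.
    + rewrite !decR_false by tauto. rewrite Rabs_right; lra.
Qed.

Lemma omegaK_step I K : Rabs (omegaK N I (S K) - omegaK N I K) <= 2 * pmax N ^ K.
Proof.
  unfold omegaK. rewrite sumR_pow2_S, <- sumR_sub.
  eapply Rle_trans; [apply sumR_abs|].
  pose proof (cantor_mass_at_point (lo I) K) as Hlo. pose proof (cantor_mass_at_point (hi I) K) as Hhi.
  replace (2 * pmax N ^ K) with (pmax N ^ K + pmax N ^ K) by ring.
  eapply Rle_trans; [|apply (Rplus_le_compat _ _ _ _ Hlo Hhi)].
  rewrite <- sumR_add. apply sumR_le. intros j _. apply omegaK_parent_step.
Qed.

Lemma omegaK_cv I : exists l, Un_cv (omegaK N I) l.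
Proof.
  apply (cv_of_geometric_steps _ 2 (pmax N)); [pose proof (pmin_pmax_bounds N HN); lra|].
  apply omegaK_step.
Qed.

Lemma omega_ge0 I : 0 <= omega N I.
Proof. rewrite omega_lim. apply lim_ge0. apply omegaK_ge0. Qed.

Lemma omegaK_disjoint_sum_le I0 (I : nat -> itv) K n :
  (forall x, inI I0 x <-> exists r, inI (I r) x) ->
  (forall r r' x, r <> r' -> inI (I r) x -> inI (I r') x -> False) ->
  sumR n (fun r => omegaK N (I r) K) <= omegaK N I0 K.
Proof.
  intros Hcov Hdis. unfold omegaK. rewrite sumR_exchange. apply sumR_le. intros j _.
  pose proof (wt_pos N HN K j) as Hw. set (z := zc N K j).
  induction n as [|n IH]; simpl; [apply decR_between; lra|].
  destruct (classic (inI (I n) z)) as [Hz|Hz].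
  - rewrite sumR_eq0.
    + rewrite !decR_true; [lra|apply Hcov; eauto|auto].
    + intros r Hr. apply decR_false. intro Hr'. apply (Hdis r n z); auto. lia.
  - rewrite (decR_false _ _ _ Hz). lra.
Qed.

Lemma omega_disjoint_sum_le I0 (I : nat -> itv) n :
  (forall x, inI I0 x <-> exists r, inI (I r) x) ->
  (forall r r' x, r <> r' -> inI (I r) x -> inI (I r') x -> False) ->
  sumR n (fun r => omega N (I r)) <= omega N I0.
Proof.
  intros Hcov Hdis. destruct (omegaK_cv I0) as [l0 Hl0].
  rewrite omega_lim, (lim_of_cv _ _ Hl0).
  apply (cv_le (fun K => sumR n (fun r => omegaK N (I r) K)) (omegaK N I0) _ _ 0%nat); auto.
  - apply cv_sumR. intros r _. destruct (omegaK_cv (I r)) as [l Hl].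
    rewrite omega_lim, (lim_of_cv _ _ Hl). exact Hl.
  - intros K _. apply omegaK_disjoint_sum_le; auto.
Qed.

Lemma omega_int_bounds I0 (F : R -> R) n0 B :
  (forall x, 0 <= F x) ->
  (forall K, (K >= n0)%nat -> sumR (2 ^ K) (fun j => wt N K j * F (zc N K j)) <= B) ->
  0 <= omega_int N I0 F <= B.
Proof.
  intros HF HB. assert (Hterm : forall K j, 0 <= decR (inI I0 (zc N K j)) (F (zc N K j) * wt N K j) 0
                                           <= wt N K j * F (zc N K j)).
  { intros K j. pose proof (wt_pos N HN K j). pose proof (HF (zc N K j)).
    rewrite Rmult_comm. apply decR_between. nra. }
  assert (HB0 : 0 <= B).
  { eapply Rle_trans; [|apply (HB n0); lia]. apply sumR_ge0. intros j _.
    pose proof (Hterm n0 j). lra. }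
  unfold omega_int. split.
  - apply lim_ge0. intros K. apply sumR_ge0. intros j _. apply Hterm.
  - apply (lim_le _ n0); auto. intros K HK. eapply Rle_trans; [|apply (HB K HK)].
    apply sumR_le. intros j _. apply Hterm.
Qed.

End Omega.

(** * The measure [σ̇] and its first atom in an interval *)

Definition atom_mass (N : nat) (I : itv) (k j : nat) : R := decR (inI I (zc N k j)) (sw N k j) 0.

Definition sigmaK (N : nat) (I : itv) (n : nat) : R := sum_cantor n (atom_mass N I).

Definition atom_in (N : nat) (I : itv) (k j : nat) : Prop := (j < 2 ^ k)%nat /\ inI I (zc N k j).

Definition first_atom (N : nat) (I : itv) (k j : nat) : Prop :=
  atom_in N I k j /\ forall g i, atom_in N I g i -> (k <= g)%nat.

Lemma sigma_lim N I : Defs.sigma N I = lim (sigmaK N I).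
Proof. reflexivity. Qed.

Lemma first_atom_exists N I : (exists k j, atom_in N I k j) -> exists k j, first_atom N I k j.
Proof.
  intros [k Hk]. revert Hk. induction k as [k IH] using (well_founded_induction Nat.lt_wf_0).
  intros [j Hj]. destruct (classic (exists g i, (g < k)%nat /\ atom_in N I g i)) as [[g [i [Hg Hi]]]|Hn].
  - apply (IH g Hg). eauto.
  - exists k, j. split; auto. intros g i Hi. apply Nat.nlt_ge. intro. apply Hn; eauto.
Qed.

Section Sigma.

Variable N : nat.
Hypothesis HN : (16 <= N)%nat.
Variable I : itv.

Lemma atom_mass_between k j : 0 <= atom_mass N I k j <= sw N k j.
Proof. apply decR_between, Rlt_le, sw_pos; auto. Qed.

Lemma generation_mass_le g : sumR (2 ^ g) (atom_mass N I g) <= (/ 2) ^ g.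
Proof.
  pose proof (pmin_pmax_bounds N HN). pose proof (eta_bounds N HN).
  eapply Rle_trans; [apply (sumR_le_const _ _ ((eta N ^ 2 / pmin N) ^ g))|].
  - intros j Hj. eapply Rle_trans; [apply atom_mass_between|]. rewrite sw_eq.
    pose proof (wt_desc_lower N HN g 0 0 j Hj) as Hw. simpl in Hw. rewrite Rmult_1_r in Hw.
    pose proof (pow_lt (pmin N) g ltac:(lra)).
    replace ((eta N ^ 2 / pmin N) ^ g) with (clen N g ^ 2 / pmin N ^ g)
      by (unfold Rdiv; rewrite Rpow_mult_distr, pow_inv, <- !pow_mult, Nat.mul_comm, pow_mult; reflexivity).
    apply Rmult_le_compat_l; [apply pow2_ge_0|]. apply Rinv_le_contravar; lra.
  - rewrite pow_INR, <- Rpow_mult_distr. apply pow_incr. split.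
    + apply Rmult_le_pos; [simpl; lra|]. apply Rle_mult_inv_pos; [apply pow2_ge_0|lra].
    + apply Rmult_le_reg_r with (pmin N); [lra|]. unfold Rdiv. simpl (INR 2).
      rewrite Rmult_assoc, Rmult_assoc, Rinv_l, Rmult_1_r by lra. nra.
Qed.

Lemma sigmaK_between n : 0 <= sigmaK N I n <= 2.
Proof.
  split.
  - apply sumR_ge0. intros k _. apply sumR_ge0. intros j _. apply atom_mass_between.
  - eapply Rle_trans; [apply sumR_le; intros g _; apply generation_mass_le|].
    rewrite sumR_geometric_half. pose proof (pow_le (/ 2) n ltac:(lra)). lra.
Qed.

Lemma sigmaK_S n : sigmaK N I (S n) = sigmaK N I n + sumR (2 ^ n) (atom_mass N I n).
Proof. reflexivity. Qed.

Lemma sigmaK_incr n : sigmaK N I n <= sigmaK N I (S n).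
Proof.
  rewrite sigmaK_S.
  pose proof (sumR_ge0 (2 ^ n) (atom_mass N I n) (fun j _ => proj1 (atom_mass_between n j))). lra.
Qed.

Lemma sigmaK_cv : Un_cv (sigmaK N I) (Defs.sigma N I).
Proof.
  destruct (growing_cv (sigmaK N I)) as [l Hl].
  - exact sigmaK_incr.
  - exists 2. intros x [n ->]. apply sigmaK_between.
  - rewrite sigma_lim, (lim_of_cv _ _ Hl). exact Hl.
Qed.

Lemma sigmaK_le_sigma n : sigmaK N I n <= Defs.sigma N I.
Proof. apply growing_ineq; [exact sigmaK_incr|exact sigmaK_cv]. Qed.

Lemma sigma_ge0 : 0 <= Defs.sigma N I.
Proof. exact (sigmaK_le_sigma 0). Qed.

Lemma sigma_eq0_of_no_atom : ~ (exists k j, atom_in N I k j) -> Defs.sigma N I = 0.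
Proof.
  intros Hno. rewrite sigma_lim, <- (lim_of_cv (fun _ => 0) 0 (cv_const 0)). apply lim_ext. intros n.
  apply sumR_eq0. intros k _. apply sumR_eq0. intros j Hj.
  apply decR_false. intros Hin. apply Hno. exists k, j. split; auto.
Qed.

Variables k jA : nat.
Hypothesis Hfirst : first_atom N I k jA.

(* An atom outside [I^k_jA] would be separated from [zc k jA] by a centre of lower
   generation, which lies in [I] by convexity. *)
Lemma atom_desc_first g i : atom_in N I g i ->
  (k <= g)%nat /\ exists t, (t < 2 ^ (g - k))%nat /\ i = (jA * 2 ^ (g - k) + t)%nat.
Proof.
  intros Hi. destruct Hfirst as [[HjA HcI] Hmin]. pose proof (Hmin g i Hi) as Hkg. split; auto.
  set (m := (g - k)%nat). assert (Hm : (2 ^ m <> 0)%nat) by (apply Nat.pow_nonzero; lia).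
  set (d := (i / 2 ^ m)%nat). set (t := (i mod 2 ^ m)%nat).
  assert (Ei : i = (d * 2 ^ m + t)%nat) by (unfold d, t; rewrite Nat.mul_comm; apply Nat.div_mod; auto).
  assert (Ht : (t < 2 ^ m)%nat) by (apply Nat.mod_upper_bound; auto).
  exists t. split; auto. destruct (Nat.eq_dec d jA) as [<-|E]; auto. exfalso.
  assert (Hd : (d < 2 ^ k)%nat).
  { destruct Hi as [Hi _]. replace g with (k + m)%nat in Hi by lia. rewrite Nat.pow_add_r in Hi.
    apply Nat.Div0.div_lt_upper_bound. lia. }
  assert (Hz : in_cantor N k d (zc N g i)).
  { apply (in_cantor_desc N HN m k d t); auto. replace (k + m)%nat with g by lia. rewrite <- Ei.
    apply zc_in_cantor; auto. }
  destruct (cantor_separated N HN k d jA _ _ Hd HjA E Hz (zc_in_cantor N HN k jA))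
    as [h [b [Hh [Hb Hbt]]]].
  assert (Hab : atom_in N I h b).
  { split; auto. destruct Hi as [_ Hi].
    destruct Hbt; [apply (inI_convex I _ _ _ Hi HcI)|apply (inI_convex I _ _ _ HcI Hi)]; lra. }
  pose proof (Hmin h b Hab). lia.
Qed.

Lemma sigmaK_first : sigmaK N I (S k) = sw N k jA.
Proof.
  destruct Hfirst as [[HjA HcI] Hmin].
  unfold sigmaK, sum_cantor. simpl sumR. rewrite sumR_eq0, Rplus_0_l.
  - rewrite (sumR_single _ jA); auto.
    + apply decR_true; auto.
    + intros i Hi Hne. apply decR_false. intro Hin.
      destruct (atom_desc_first k i (conj Hi Hin)) as [_ [t [Ht ->]]].
      rewrite Nat.sub_diag in *. simpl in *. lia.
  - intros g Hg. apply sumR_eq0. intros i Hi. apply decR_false. intro Hin.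
    pose proof (Hmin g i (conj Hi Hin)). lia.
Qed.

Lemma sw_first_le_sigma : sw N k jA <= Defs.sigma N I.
Proof. rewrite <- sigmaK_first. apply sigmaK_le_sigma. Qed.

Lemma sigma_first_only : (forall g i, (k < g)%nat -> ~ atom_in N I g i) -> Defs.sigma N I = sw N k jA.
Proof.
  intros Hno.
  assert (Hconst : forall d, sigmaK N I (S k + d) = sw N k jA).
  { induction d as [|d IH]; [rewrite Nat.add_0_r; apply sigmaK_first|].
    rewrite Nat.add_succ_r, sigmaK_S, IH, sumR_eq0; [ring|].
    intros i Hi. apply decR_false. intro Hin. apply (Hno (S k + d)%nat i); [lia|split; auto]. }
  rewrite sigma_lim. apply lim_of_cv. intros e He. exists (S k). intros n Hn.
  replace n with (S k + (n - S k))%nat by lia. rewrite Hconst. unfold R_dist.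
  rewrite Rminus_diag, Rabs_R0. exact He.
Qed.

End Sigma.

(** * The three estimates around the first atom *)

Lemma atom_pair_eq N I c k j k' j' :
  decR (inI I (zc N k j) /\ inI I (zc N k' j'))
    (sw N k j * sw N k' j' * (zc N k j - zc N k' j') ^ 2 / len I ^ 2) 0 =
  atom_mass N I k j * atom_mass N I k' j' *
    ((zc N k j - c) / len I - (zc N k' j' - c) / len I) ^ 2.
Proof.
  unfold atom_mass.
  destruct (classic (inI I (zc N k j))) as [H1|H1]; destruct (classic (inI I (zc N k' j'))) as [H2|H2];
    [rewrite !decR_true by tauto; unfold Rdiv; rewrite <- pow_inv; ring|..];
    rewrite decR_false by tauto; try rewrite (decR_false _ _ _ H1); try rewrite (decR_false _ _ _ H2); ring.
Qed.

Lemma rel_pos_sq_le I c x : inI I c -> inI I x -> ((x - c) / len I) ^ 2 <= 1.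
Proof.
  intros Hc Hx. pose proof (inI_dist_le_len I _ _ Hx Hc) as Hd.
  destruct (Req_dec (len I) 0) as [E|E].
  - rewrite E. unfold Rdiv. rewrite Rinv_0, Rmult_0_r. simpl. lra.
  - assert (0 < len I) by (pose proof (Rabs_pos (x - c)); lra).
    unfold Rdiv. rewrite Rpow_mult_distr, pow_inv.
    apply Rmult_le_reg_r with (len I ^ 2); [apply pow_lt; auto|].
    rewrite Rmult_assoc, Rinv_l, Rmult_1_r, Rmult_1_l by (apply pow_nonzero; auto).
    rewrite <- !Rsqr_pow2, Rsqr_abs. apply Rsqr_incr_1; auto using Rabs_pos; lra.
Qed.

Section FirstAtom.

Variable N : nat.
Hypothesis HN : (16 <= N)%nat.
Variable I : itv.
Variables k jA : nat.
Hypothesis Hfirst : first_atom N I k jA.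

Lemma atom_beside_first g i : (k < g)%nat -> atom_in N I g i ->
  (forall x, in_cantor N g i x -> x <= zc N k jA - 7/16 * clen N k) \/
  (forall x, in_cantor N g i x -> zc N k jA + 7/16 * clen N k <= x).
Proof.
  intros Hkg Hi. destruct (atom_desc_first N HN I k jA Hfirst g i Hi) as [_ [t [Ht ->]]].
  destruct (g - k)%nat as [|m] eqn:Em; [lia|]. replace g with (k + S m)%nat by lia.
  destruct (in_cantor_desc_child N HN m k jA t Ht) as [Hc|Hc]; [left|right]; intros x Hx;
    apply Hc in Hx; [apply in_cantor_left in Hx|apply in_cantor_right in Hx]; tauto.
Qed.

Lemma atom_far_from_first g i : (k < g)%nat -> atom_in N I g i ->
  7/16 * clen N k <= Rabs (zc N g i - zc N k jA).
Proof.
  intros Hkg Hi. pose proof (zc_in_cantor N HN g i) as Hz. pose proof (clen_pos N HN k).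
  destruct (atom_beside_first g i Hkg Hi) as [Hs|Hs]; specialize (Hs _ Hz);
    [rewrite Rabs_left1|rewrite Rabs_right]; lra.
Qed.

(* The child of [I^g_i] facing [I^k_jA] lies between the centres [zc g i] and [zc k jA],
   both of which are in [I]. *)
Lemma atom_inner_child g i : (k < g)%nat -> atom_in N I g i ->
  exists ch, (ch = 2 * i \/ ch = 2 * i + 1)%nat /\ forall x, in_cantor N (S g) ch x -> inI I x.
Proof.
  intros Hkg Hi. destruct Hfirst as [[_ HcI] _]. pose proof Hi as [_ HzI].
  pose proof (clen_pos N HN g). pose proof (clen_pos N HN k).
  destruct (atom_beside_first g i Hkg Hi) as [Hs|Hs]; [exists (2 * i + 1)%nat|exists (2 * i)%nat];
    split; auto; intros x Hx.
  - apply in_cantor_right in Hx as [Hx Hx']; auto. specialize (Hs x Hx).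
    apply (inI_convex I _ _ _ HzI HcI). lra.
  - apply in_cantor_left in Hx as [Hx Hx']; auto. specialize (Hs x Hx).
    apply (inI_convex I _ _ _ HcI HzI). lra.
Qed.

Lemma omega_desc_ge_inner K g i ch : (S g <= K)%nat -> (ch = 2 * i \/ ch = 2 * i + 1)%nat ->
  (forall x, in_cantor N (S g) ch x -> inI I x) -> wt N (S g) ch <= omega_desc N I K g i.
Proof.
  intros HK Hch Hin. unfold omega_desc.
  set (d := (K - S g)%nat). replace (K - g)%nat with (S d) by lia. replace K with (S g + d)%nat by lia.
  rewrite (sumR_desc_S (fun j => decR (inI I (zc N (S g + d) j)) (wt N (S g + d) j) 0)).
  assert (Hhalf : forall c, 0 <= sumR (2 ^ d) (fun t =>
      decR (inI I (zc N (S g + d) (c * 2 ^ d + t))) (wt N (S g + d) (c * 2 ^ d + t)) 0)).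
  { intros c. apply sumR_ge0. intros t _. apply decR_between, Rlt_le, wt_pos; auto. }
  assert (Hfull : sumR (2 ^ d) (fun t =>
      decR (inI I (zc N (S g + d) (ch * 2 ^ d + t))) (wt N (S g + d) (ch * 2 ^ d + t)) 0) = wt N (S g) ch).
  { rewrite <- (wt_desc_sum N HN d (S g) ch). apply sumR_ext. intros t Ht. apply decR_true.
    apply Hin, (in_cantor_desc N HN d _ _ t); auto. apply zc_in_cantor; auto. }
  pose proof (Hhalf (2 * i)%nat). pose proof (Hhalf (2 * i + 1)%nat).
  destruct Hch as [-> | ->]; lra.
Qed.

Lemma atom_mass_density_le g i K : (k < g)%nat -> (i < 2 ^ g)%nat -> (S g <= K)%nat ->
  atom_mass N I g i * density N k jA ^ 2 <= 3 * (/ 2) ^ (g - k) * omega_desc N I K g i.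
Proof.
  intros Hkg Hig HK. pose proof (pmin_pmax_bounds N HN). pose proof (omega_desc_ge0 N HN I K g i).
  pose proof (pow_le (/ 2) (g - k) ltac:(lra)).
  destruct (classic (inI I (zc N g i))) as [Hz|Hz];
    [|unfold atom_mass; rewrite decR_false, Rmult_0_l by auto; apply Rmult_le_pos; lra].
  unfold atom_mass. rewrite decR_true by auto.
  destruct (atom_desc_first N HN I k jA Hfirst g i (conj Hig Hz)) as [_ [t [Ht Ei]]].
  destruct (atom_inner_child g i Hkg (conj Hig Hz)) as [ch [Hch Hin]].
  pose proof (omega_desc_ge_inner K g i ch HK Hch Hin).
  assert (pmin N * wt N g i <= wt N (S g) ch)
    by (destruct (wt_children N HN g i) as [_ [? ?]]; destruct Hch as [-> | ->]; lra).
  pose proof (wt_desc_lower N HN (g - k) k jA t Ht) as Hw. rewrite <- Ei in Hw.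
  pose proof (sw_density_le N HN k jA (g - k) i Hw) as Hs.
  replace (k + (g - k))%nat with g in Hs by lia. pose proof (wt_pos N HN g i).
  eapply Rle_trans; [exact Hs|].
  rewrite (Rmult_comm 3), Rmult_assoc. apply Rmult_le_compat_l; [lra|]. nra.
Qed.

Lemma generation_mass_density_le g K : (k < g)%nat -> (S g <= K)%nat ->
  sumR (2 ^ g) (atom_mass N I g) * density N k jA ^ 2 <= 3 * (/ 2) ^ (g - k) * omegaK N I K.
Proof.
  intros Hkg HK. rewrite (omegaK_desc_split N I K g) by lia.
  rewrite Rmult_comm, <- !sumR_scal. apply sumR_le. intros i Hi.
  rewrite Rmult_comm. apply atom_mass_density_le; auto.
Qed.

Lemma sigmaK_density_le d K : (S k + d <= K)%nat ->
  sigmaK N I (S k + d) * density N k jA ^ 2 <=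
  sw N k jA * density N k jA ^ 2 + 3 * (1 - (/ 2) ^ d) * omegaK N I K.
Proof.
  induction d as [|d IH]; intros HK.
  - rewrite Nat.add_0_r, (sigmaK_first N HN I k jA Hfirst). simpl. lra.
  - rewrite Nat.add_succ_r, sigmaK_S.
    pose proof (IH ltac:(lia)). pose proof (generation_mass_density_le (S k + d) K ltac:(lia) ltac:(lia)).
    replace (S k + d - k)%nat with (S d) in * by lia. simpl pow in *. lra.
Qed.

Lemma sigma_excess_le_omega : (Defs.sigma N I - sw N k jA) * density N k jA ^ 2 <= 3 * omega N I.
Proof.
  destruct (omegaK_cv N HN I) as [l Hl]. rewrite omega_lim, (lim_of_cv _ _ Hl).
  apply (cv_le_const (fun n => (sigmaK N I n - sw N k jA) * density N k jA ^ 2) _ (S k)).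
  { apply CV_mult; [apply CV_minus; [apply sigmaK_cv; auto|apply cv_const]|apply cv_const]. }
  intros n Hn. replace n with (S k + (n - S k))%nat by lia.
  apply (cv_le (fun _ => _) (fun K => 3 * omegaK N I K) _ _ (S k + (n - S k))%nat (cv_const _)).
  { apply CV_mult; [apply cv_const|exact Hl]. }
  intros K HK. pose proof (sigmaK_density_le (n - S k) K HK). pose proof (omegaK_ge0 N HN I K).
  pose proof (pow_le (/ 2) (n - S k) ltac:(lra)). nra.
Qed.

Let rel_pos (g i : nat) : R := (zc N g i - zc N k jA) / len I.

Lemma sigma_dbl_partial_eq n :
  sumR n (fun g => sumR n (fun g' => sumR (2 ^ g) (fun i => sumR (2 ^ g') (fun i' =>
    decR (inI I (zc N g i) /\ inI I (zc N g' i'))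
      (sw N g i * sw N g' i' * (zc N g i - zc N g' i') ^ 2 / len I ^ 2) 0))))
  = 2 * sigmaK N I n * sum_cantor n (fun g i => atom_mass N I g i * rel_pos g i ^ 2)
    - 2 * sum_cantor n (fun g i => atom_mass N I g i * rel_pos g i) ^ 2.
Proof.
  unfold sigmaK. rewrite <- sum_cantor_variance. unfold sum_cantor. apply sumR_ext. intros g _.
  rewrite sumR_exchange. apply sumR_ext. intros i _. apply sumR_ext. intros g' _.
  apply sumR_ext. intros i' _. apply atom_pair_eq.
Qed.

Lemma rel_pos_sq_sum_le n : (S k <= n)%nat ->
  sum_cantor n (fun g i => atom_mass N I g i * rel_pos g i ^ 2) <= sigmaK N I n - sw N k jA.
Proof.
  intros Hn. destruct Hfirst as [[HjA HcI] _].
  assert (H : sum_cantor n (fun g i => atom_mass N I g i * rel_pos g i ^ 2 + (-1) * atom_mass N I g i)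
              <= atom_mass N I k jA * rel_pos k jA ^ 2 + (-1) * atom_mass N I k jA).
  { apply (sum_cantor_le_term n (fun g i => atom_mass N I g i * rel_pos g i ^ 2 + (-1) * atom_mass N I g i));
      auto; intros g i; unfold atom_mass.
    destruct (classic (inI I (zc N g i))) as [Hz|Hz].
    - rewrite decR_true by auto. pose proof (rel_pos_sq_le I _ _ HcI Hz). pose proof (sw_pos N HN g i).
      unfold rel_pos. nra.
    - rewrite decR_false by auto. lra. }
  assert (Hrel : rel_pos k jA = 0) by (unfold rel_pos; rewrite Rminus_diag; unfold Rdiv; ring).
  assert (Hmass : atom_mass N I k jA = sw N k jA) by (apply decR_true; auto).
  rewrite sum_cantor_add, sum_cantor_scal, Hrel, Hmass in H.
  change (sum_cantor n (atom_mass N I)) with (sigmaK N I n) in H.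
  replace (sw N k jA * 0 ^ 2) with 0 in H by ring. lra.
Qed.

Lemma sigma_dbl_le : sigma_dbl N I <= 2 * Defs.sigma N I * (Defs.sigma N I - sw N k jA).
Proof.
  pose proof (sw_first_le_sigma N HN I k jA Hfirst). pose proof (sigma_ge0 N HN I).
  apply (lim_le_cv _ (fun n => 2 * sigmaK N I n * (sigmaK N I n - sw N k jA)) _ (S k)).
  - apply CV_mult; [apply CV_mult; [apply cv_const|]|apply CV_minus; [|apply cv_const]];
      apply sigmaK_cv; auto.
  - intros n Hn. rewrite sigma_dbl_partial_eq.
    pose proof (rel_pos_sq_sum_le n Hn). pose proof (sigmaK_between N HN I n).
    pose proof (pow2_ge_0 (sum_cantor n (fun g i => atom_mass N I g i * rel_pos g i))). nra.
  - apply Rmult_le_pos; lra.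
Qed.

Lemma sigma_Esq_le : 0 < Defs.sigma N I -> Defs.sigma N I * Esq N I <= Defs.sigma N I - sw N k jA.
Proof.
  intros Hs. pose proof sigma_dbl_le. unfold Esq.
  replace (Defs.sigma N I * (/ 2 * / Defs.sigma N I ^ 2 * sigma_dbl N I))
    with (sigma_dbl N I / (2 * Defs.sigma N I)) by (field; lra).
  apply Rmult_le_reg_r with (2 * Defs.sigma N I); [lra|].
  unfold Rdiv. rewrite Rmult_assoc, Rinv_l, Rmult_1_r by lra. lra.
Qed.

End FirstAtom.

Section PoissonMass.

Variable N : nat.
Hypothesis HN : (16 <= N)%nat.

Lemma inv_pmin_le_third_inv_eta : 3 * / pmin N <= / eta N.
Proof.
  pose proof (pmin_pmax_bounds N HN). pose proof (eta_bounds N HN).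
  assert (/ pmin N <= 32/15) by (replace (32/15) with (/ (15/32)) by field; apply Rinv_le_contravar; lra).
  assert (16 <= / eta N) by (replace 16 with (/ (/ 16)) by field; apply Rinv_le_contravar; lra).
  lra.
Qed.

Lemma desc_sum_far_le c (F : R -> R) h s d :
  (forall x, 0 < Rabs (x - c) -> F x <= / Rabs (x - c)) ->
  (forall x, in_cantor N (S h) s x -> 7/8 * clen N h <= Rabs (x - c)) ->
  sumR (2 ^ d) (fun t => wt N (S h + d) (s * 2 ^ d + t) * F (zc N (S h + d) (s * 2 ^ d + t)))
  <= 2 * / clen N h * wt N (S h) s.
Proof.
  intros HFc Hfar. pose proof (clen_pos N HN h).
  apply (wt_desc_average_le N HN d (S h) s F). intros x Hx. specialize (Hfar x Hx).
  eapply Rle_trans; [apply HFc; lra|]. eapply Rle_trans; [apply Rinv_le_contravar; [|exact Hfar]; lra|].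
  rewrite Rinv_mult. replace (/ (7/8)) with (8/7) by field.
  pose proof (Rinv_0_lt_compat _ H). lra.
Qed.

(* Induction on the depth [m] of [c]'s interval below [I^h_b]: the sibling not containing [c]
   is at distance [>= 7/8 |I^h|] from [c], and its contribution is paid for by
   [3 / pmin <= 1 / eta]. *)
Lemma desc_sum_near_point_le c L (F : R -> R) :
  (forall x, 0 <= F x) -> (forall x, F x <= L) ->
  (forall x, 0 < Rabs (x - c) -> F x <= / Rabs (x - c)) ->
  forall m h b t d, (t < 2 ^ m)%nat -> (m <= d)%nat -> in_cantor N (h + m) (b * 2 ^ m + t) c ->
  sumR (2 ^ d) (fun t' => wt N (h + d) (b * 2 ^ d + t') * F (zc N (h + d) (b * 2 ^ d + t')))
  <= (L + / clen N (h + m) - / clen N h * (/ pmin N) ^ m) * wt N (h + m) (b * 2 ^ m + t).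
Proof.
  intros HF0 HFL HFc. pose proof (pmin_pmax_bounds N HN). pose proof inv_pmin_le_third_inv_eta.
  induction m as [|m IH]; intros h b t d Ht Hd Hc.
  - simpl in Ht. replace t with 0%nat by lia. rewrite Nat.add_0_r, Nat.mul_1_r, Nat.add_0_r.
    replace (L + / clen N h - / clen N h * (/ pmin N) ^ 0) with L by (simpl; ring).
    apply wt_desc_average_le; auto.
  - destruct d as [|d]; [lia|].
    pose proof (wt_le_desc N HN (S m) h b t Ht) as Hup.
    destruct (in_cantor_near_far N HN m h b t c Ht Hc) as [cn [cf [t' [Ht' [E [Hcs Hfar]]]]]].
    rewrite E in Hc, Hup |- *. rewrite <- plus_n_Sm, <- Nat.add_succ_l in Hc, Hup |- *.
    rewrite <- plus_n_Sm, <- Nat.add_succ_l, (sumR_desc_S (fun i => wt N (S h + d) i * F (zc N (S h + d) i))).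
    pose proof (IH (S h) cn t' d Ht' ltac:(lia) Hc) as Hnear.
    pose proof (desc_sum_far_le c F h cf d HFc Hfar) as Hfar_sum.
    assert (wt N (S h) cf <= wt N h b)
      by (destruct (wt_children N HN h b) as [Hsum _]; pose proof (wt_pos N HN (S h) (2 * b));
          pose proof (wt_pos N HN (S h) (2 * b + 1)); destruct Hcs as [[_ ->]|[_ ->]]; lra).
    pose proof (wt_pos N HN (S h + m) (cn * 2 ^ m + t')). set (w := wt N (S h + m) (cn * 2 ^ m + t')) in *.
    set (P := (/ pmin N) ^ m) in *. assert (0 < P) by (apply pow_lt, Rinv_0_lt_compat; lra).
    assert (0 < / clen N h) by (apply Rinv_0_lt_compat, clen_pos; auto).
    rewrite clen_S, Rinv_mult in Hnear. simpl pow in *. fold P in Hup |- *.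
    assert (/ clen N h * P * w * (3 * / pmin N) <= / clen N h * P * w * / eta N)
      by (apply Rmult_le_compat_l; [apply Rmult_le_pos; [apply Rmult_le_pos|]|]; lra).
    assert (2 * / clen N h * wt N (S h) cf <= 2 * / clen N h * (/ pmin N * P * w))
      by (apply Rmult_le_compat_l; lra).
    destruct Hcs as [[-> ->]|[-> ->]]; lra.
Qed.

Lemma Pomega_bounds I I0 k jA : (jA < 2 ^ k)%nat -> inI I (zc N k jA) -> 7/16 * clen N k <= len I ->
  0 <= Pomega N I I0 <= 4 * density N k jA.
Proof.
  intros HjA Hc HL. pose proof (clen_pos N HN k). pose proof (wt_pos N HN k jA).
  assert (Hlen : 0 < len I) by lra.
  apply (omega_int_bounds N HN I0 (Pker I) k); [apply Pker_ge0; auto|]. intros K HK.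
  change (sumR (2 ^ K) (fun j => wt N K j * Pker I (zc N K j))) with
    (sumR (2 ^ K) (fun j => wt N (0 + K) (0 * 2 ^ K + j) * Pker I (zc N (0 + K) (0 * 2 ^ K + j)))).
  eapply Rle_trans.
  - apply (desc_sum_near_point_le (zc N k jA) (/ len I) (Pker I));
      [apply Pker_ge0|apply Pker_le_inv_len|intros x; apply Pker_le_inv_dist| | |apply zc_in_cantor]; auto.
  - change (0 + k)%nat with k. change (0 * 2 ^ k + jA)%nat with jA.
    assert (/ len I <= 16/7 * / clen N k).
    { apply Rle_trans with (/ (7/16 * clen N k)); [apply Rinv_le_contravar; lra|].
      rewrite Rinv_mult. right. field. lra. }
    assert (0 <= / clen N 0 * (/ pmin N) ^ k).
    { apply Rmult_le_pos; [apply Rlt_le, Rinv_0_lt_compat, clen_pos; auto|].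
      apply pow_le, Rlt_le, Rinv_0_lt_compat. pose proof (pmin_pmax_bounds N HN). lra. }
    assert (0 < / clen N k) by (apply Rinv_0_lt_compat; lra).
    unfold density, Rdiv. nra.
Qed.

End PoissonMass.

Section Summand.

Variable N : nat.
Hypothesis HN : (16 <= N)%nat.

Lemma excess_Pomega_sq_le I I0 k jA g i : first_atom N I k jA -> (k < g)%nat -> atom_in N I g i ->
  (Defs.sigma N I - sw N k jA) * Pomega N I I0 ^ 2 <= 48 * omega N I.
Proof.
  intros Hfirst Hg Hi. pose proof (atom_far_from_first N HN I k jA Hfirst g i Hg Hi).
  pose proof (sigma_excess_le_omega N HN I k jA Hfirst).
  pose proof (sw_first_le_sigma N HN I k jA Hfirst).
  destruct Hfirst as [[HjA Hc] _]. pose proof (inI_dist_le_len I _ _ (proj2 Hi) Hc).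
  destruct (Pomega_bounds N HN I I0 k jA HjA Hc ltac:(lra)) as [P0 P1].
  assert (Pomega N I I0 ^ 2 <= 16 * density N k jA ^ 2)
    by (replace 16 with (4 ^ 2) by ring; rewrite <- Rpow_mult_distr; apply pow_incr; lra).
  assert ((Defs.sigma N I - sw N k jA) * Pomega N I I0 ^ 2
          <= (Defs.sigma N I - sw N k jA) * (16 * density N k jA ^ 2))
    by (apply Rmult_le_compat_l; lra).
  lra.
Qed.

Lemma term_le_omega I I0 : term N I I0 <= 48 * omega N I.
Proof.
  pose proof (omega_ge0 N HN I). unfold term.
  destruct (classic (Defs.sigma N I = 0)) as [Hs|Hs]; [rewrite decR_true by auto; lra|].
  rewrite decR_false by auto.
  assert (Hpos : 0 < Defs.sigma N I) by (pose proof (sigma_ge0 N HN I); lra).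
  assert (Hat : exists k j, atom_in N I k j)
    by (apply NNPP; intro Hn; apply Hs, sigma_eq0_of_no_atom; auto).
  destruct (first_atom_exists N I Hat) as [k [jA Hfirst]].
  eapply Rle_trans;
    [apply Rmult_le_compat_r; [apply pow2_ge_0|exact (sigma_Esq_le N HN I k jA Hfirst Hpos)]|].
  destruct (classic (exists g i, (k < g)%nat /\ atom_in N I g i)) as [[g [i [Hg Hi]]]|Hno].
  - apply (excess_Pomega_sq_le I I0 k jA g i); auto.
  - rewrite (sigma_first_only N HN I k jA Hfirst); [lra|].
    intros g i Hg Hi. apply Hno; eauto.
Qed.

End Summand.

Theorem mainTheorem9 :
  forall N : nat, (16 <= N)%nat ->
  exists C : R,
  forall (I0 : itv) (I : nat -> itv),
    (forall x, inI I0 x -> 0 <= x <= 1) ->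
    (forall x, inI I0 x <-> exists r, inI (I r) x) ->
    (forall r r' x, r <> r' -> inI (I r) x -> inI (I r') x -> False) ->
    forall n : nat, sumR n (fun r => term N (I r) I0) <= C * omega N I0.
Proof.
  intros N HN. exists 48. intros I0 I _ Hcov Hdis n.
  eapply Rle_trans; [apply sumR_le; intros r _; apply (term_le_omega N HN (I r) I0)|].
  rewrite sumR_scal. apply Rmult_le_compat_l; [lra|].
  apply omega_disjoint_sum_le; auto.
Qed.
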